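(* Let $X$ be a real Banach space with a normalized Schauder basis $\mathcal B=(e_n)_{n=1}^\infty$ with biorthogonal functionals $(e_n^* )$, let $\mathcal E=(\varepsilon_n)_{n=1}^\infty$ be a sequence of nonnegative numbers, and let $K=K_{\mathcal B,\mathcal E}$. Then: (1) $r^{\rm ext}(K)\le r^{\rm unc}(K)$; (2) if $r^{\rm ext}(K)<\infty$ then $r^{\rm ext}(K)=\sup_{x\in K}\|x\|$; (3) if $r^{\rm unc}(K)<\infty$ then $r^{\rm ext}(K)=r^{\rm unc}(K)=\sup_{x\in K}\|x\|$.
   Context: The brick is $K_{\mathcal B,\mathcal E}=\{x\in X:\ |e_n^*(x)|\le\varepsilon_n \text{ for all } n\}$. A point $x_0\in A$ is an extreme point of $A$ if for every nonzero $x\in X$ there is $\lambda\in[-1,1]$ with $x_0+\lambda x\notin A$ (for a brick, these are exactly the $x_0$ with $|e_n^*(x_0)|=\varepsilon_n$ for all $n$). The extreme radius $r^{\rm ext}(K)$ is the supremum of $\|x_0\|$ over extreme points $x_0$ of $K$ if an extreme point exists, and $\infty$ otherwise. The unconditional radius is $r^{\rm unc}(K)=\sup_{\theta_n=\pm1}\|\sum_{n=1}^\infty\theta_n\varepsilon_ne_n\|$, where the norm of a divergent series is $\infty$. *)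

From HB Require Import structures.
From mathcomp Require Import all_boot all_order all_algebra.
From mathcomp Require Import all_classical all_reals all_analysis.
Set Implicit Arguments. Unset Strict Implicit. Unset Printing Implicit Defensive.
Import Order.TTheory GRing.Theory Num.Theory.
Import numFieldNormedType.Exports.
Local Open Scope classical_set_scope.
Local Open Scope ring_scope.

Definition schauder_basis (R : realType) (X : normedModType R)
    (e : nat -> X) (estar : nat -> X -> R) : Prop :=
  (forall x : X, series (fun n => estar n x *: e n) @ \oo --> x) /\
  (forall (a : nat -> R) (x : X),
      series (fun n => a n *: e n) @ \oo --> x -> forall n, a n = estar n x).

Definition normalized (R : realType) (X : normedModType R) (e : nat -> X) :=
  forall n, `|e n| = 1.

Definition brick (R : realType) (X : normedModType R)
    (estar : nat -> X -> R) (eps : nat -> R) : set X :=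
  [set x | forall n, `|estar n x| <= eps n].

Definition extreme_point (R : realType) (X : normedModType R)
    (A : set X) (x0 : X) : Prop :=
  A x0 /\ forall x : X, x != 0 ->
    exists lam : R, -1 <= lam <= 1 /\ ~ A (x0 + lam *: x).

Definition series_norm (R : realType) (X : normedModType R) (u : nat -> X)
  : \bar R :=
  if pselect (cvgn (series u)) then (`|limn (series u)|)%:E else +oo%E.

Definition ext_radius (R : realType) (X : normedModType R) (A : set X)
  : \bar R :=
  if pselect (exists x0, extreme_point A x0)
  then ereal_sup [set (`|x0|)%:E | x0 in extreme_point A]
  else +oo%E.

Definition unc_radius (R : realType) (X : normedModType R)
    (e : nat -> X) (eps : nat -> R) : \bar R :=
  ereal_sup [set series_norm (fun n => theta n * eps n *: e n)
            | theta in [set theta : nat -> R | forall n, theta n = 1 \/ theta n = -1]].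

Definition sup_norm (R : realType) (X : normedModType R) (A : set X) : \bar R :=
  ereal_sup [set (`|x|)%:E | x in A].

From HB Require Import structures.
From mathcomp Require Import all_boot all_order all_algebra.
From mathcomp Require Import all_classical all_reals all_analysis.
From mathcomp Require Import ring lra.
Import Order.TTheory GRing.Theory Num.Theory.
Import numFieldNormedType.Exports.
Local Open Scope classical_set_scope.
Local Open Scope ring_scope.

(* Uniqueness of expansions makes each [estar n] linear with [estar n (e k)]
   the Kronecker delta, so the extreme points of the brick are exactly its
   vertices [|estar n x| = eps n].  Every vertex expands as a signed series
   [\sum theta_n eps_n e_n], which gives (1), and every such convergent
   series is a vertex, which gives (3) once (2) is known.  For (2), if all
   vertices have norm at most [M], then so does every point of the brick:
   moving one coordinate of a vertex to [+eps k] or [-eps k] yields two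
   vertices, the point with that coordinate set to any value in
   [[-eps k, eps k]] lies on the segment between them, and the norm is
   convex; inducting on the number of replaced coordinates bounds all the
   partial expansions, and the brick point is their limit. *)

Section Coordinates.
Context {R : realType} {X : normedModType R}.
Context {e : nat -> X} {estar : nat -> X -> R}.
Hypothesis hB : schauder_basis e estar.

Lemma coord_linear a x y n : estar n (a *: x + y) = a * estar n x + estar n y.
Proof.
symmetry; apply: (hB.2 (fun n => a * estar n x + estar n y)).
have -> : series (fun n => (a * estar n x + estar n y) *: e n) =
    a *: series (fun n => estar n x *: e n) + series (fun n => estar n y *: e n).
  apply: funext => N; rewrite !fctE /series /= scaler_sumr -big_split /=.
  by apply: eq_bigr => i _; rewrite scalerDl scalerA.
by apply: cvgD; [apply: cvgZ; [exact: cvg_cst | exact: hB.1] | exact: hB.1].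
Qed.

Lemma coord0 n : estar n 0 = 0.
Proof. by have := coord_linear (-1) 0 0 n; rewrite scaler0 addr0 mulN1r addNr. Qed.

Lemma coord_addZ x lam y n : estar n (x + lam *: y) = estar n x + lam * estar n y.
Proof. by rewrite addrC coord_linear addrC. Qed.

Lemma coord_basis n k : estar n (e k) = (n == k)%:R.
Proof.
symmetry; apply: (hB.2 (fun m => (m == k)%:R)).
apply: cvg_trans (near_eq_cvg _) (cvg_cst (e k)).
near=> N; rewrite /series /= (bigD1_seq k) ?iota_uniq //=; last first.
  by rewrite mem_index_iota; near: N; exact: nbhs_infty_gt.
rewrite eqxx scale1r big1 ?addr0 // => m /negbTE ->; exact: scale0r.
Unshelve. all: by end_near.
Qed.

Lemma coord_eq0 x : (forall n, estar n x = 0) -> x = 0.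
Proof.
move=> x0; apply: (cvg_unique (@norm_hausdorff _ _) (hB.1 x)).
have -> : series (fun n => estar n x *: e n) = cst 0.
  by apply: funext => N; rewrite /series /= big1 // => n _; rewrite x0 scale0r.
exact: cvg_cst.
Qed.

Lemma series_normE {a : nat -> R} {y : X} :
  series (fun n => a n *: e n) @ \oo --> y ->
  series_norm (fun n => a n *: e n) = (`|y|)%:E.
Proof.
move=> cvg_y; rewrite /series_norm.
destruct pselect as [cvg_u|no_cvg]; last by case: no_cvg; exact: cvgP cvg_y.
by rewrite /= (cvg_lim (@norm_hausdorff _ _) cvg_y).
Qed.

End Coordinates.

Lemma norm_segment_le {R : realType} {X : normedModType R} (w v : X)
    (u u' s M : R) :
  `|w + u *: v| <= M -> `|w + u' *: v| <= M -> u' <= s <= u ->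
  `|w + s *: v| <= M.
Proof.
move=> le_u le_u' /andP[u's su].
have [uu'|neq_uu'] := eqVneq u u'.
  by have -> : s = u by apply/eqP; rewrite eq_le su uu' u's.
have du : 0 < u - u' by rewrite subr_gt0 lt_neqAle eq_sym neq_uu' (le_trans u's su).
set t := (s - u') / (u - u').
have t0 : 0 <= t by apply: divr_ge0; [rewrite subr_ge0 | exact: ltW].
have t1 : t <= 1 by rewrite /t ler_pdivrMr // mul1r lerD2r.
have st : s = t * u + (1 - t) * u' by rewrite /t; field; rewrite subr_eq0.
clearbody t.
have -> : w + s *: v = t *: (w + u *: v) + (1 - t) *: (w + u' *: v).
  rewrite st !scalerDr !scalerA addrACA -!scalerDl.
  by rewrite [t + _]addrC subrK scale1r.
rewrite (le_trans (ler_normD _ _)) // !normrZ (ger0_norm t0) ger0_norm ?subr_ge0 //.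
have : t * `|w + u *: v| <= t * M by rewrite ler_wpM2l.
have : (1 - t) * `|w + u' *: v| <= (1 - t) * M by rewrite ler_wpM2l // subr_ge0.
lra.
Qed.

Definition brick_vertex {R : realType} {X : normedModType R}
  (estar : nat -> X -> R) (eps : nat -> R) (x : X) := forall n, `|estar n x| = eps n.

Section Brick.
Context {R : realType} {X : normedModType R}.
Context {e : nat -> X} {estar : nat -> X -> R} {eps : nat -> R}.
Hypothesis hB : schauder_basis e estar.
Hypothesis eps_ge0 : forall n, 0 <= eps n.

Let K := brick estar eps.

Lemma brick_vertex_extreme x0 : brick_vertex estar eps x0 -> extreme_point K x0.
Proof.
move=> vx0; split=> [n|x x_neq0]; first by rewrite vx0.
have [m xm_neq0] : exists m, estar m x != 0.
  apply: contrapT => all0; move/eqP: x_neq0; apply; apply: (coord_eq0 hB) => n.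
  by apply: contrapT => /eqP xn_neq0; apply: all0; exists n.
have [Kp|] := pselect (K (x0 + 1 *: x)); last by exists 1; split => //; lra.
have [Km|] := pselect (K (x0 + (-1) *: x)); last by exists (-1); split => //; lra.
exfalso; move: (Kp m) (Km m); rewrite !(coord_addZ hB) -(vx0 m) !mul1r !mulN1r.
set c := estar m x0; set y := estar m x.
(* [(c + y)^2 + (c - y)^2 = 2 c^2 + 2 y^2 > 2 |c|^2] *)
rewrite !ler_norml => /andP[? ?] /andP[? ?].
have : c ^+ 2 = `|c| ^+ 2 by rewrite real_normK // num_real.
have : 0 < y ^+ 2 by rewrite exprn_even_gt0.
have : 0 <= `|c| by [].
nra.
Qed.

Lemma extreme_brick_vertex x0 : extreme_point K x0 -> brick_vertex estar eps x0.
Proof.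
move=> [Kx0 extx0] n; apply/eqP; rewrite eq_le Kx0 leNgt; apply/negP => lt_n.
set d := eps n - `|estar n x0|.
have d_gt0 : 0 < d by rewrite subr_gt0.
have coord_de m : estar m (d *: e n) = d * (m == n)%:R.
  by rewrite -[d *: e n]addr0 (coord_linear hB) (coord_basis hB) (coord0 hB) addr0.
have /extx0[lam [/andP[? ?]]] : d *: e n != 0.
  apply/eqP => den0; have := coord_de n.
  by rewrite den0 (coord0 hB) eqxx mulr1 => d0; rewrite -d0 ltxx in d_gt0.
case=> m; rewrite (coord_addZ hB) coord_de.
have [->|] := eqVneq m n; last by rewrite !mulr0 addr0.
rewrite mulr1 (le_trans (ler_normD _ _)) // normrM (gtr0_norm d_gt0).
have : `|lam| * d <= d by rewrite ger_pMl // ler_norml; apply/andP.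
rewrite /d; lra.
Qed.

Lemma sign_series_vertex (theta : nat -> R) y :
  (forall n, theta n = 1 \/ theta n = -1) ->
  series (fun n => theta n * eps n *: e n) @ \oo --> y -> brick_vertex estar eps y.
Proof.
move=> theta_sign cvg_y n; rewrite -(hB.2 _ y cvg_y n) normrM.
by case: (theta_sign n) => ->; rewrite ?normrN normr1 mul1r ger0_norm.
Qed.

Context {M : R}.
Hypothesis vertex_le : forall y, brick_vertex estar eps y -> `|y| <= M.

Lemma vertex_replace_le k x : brick_vertex estar eps x -> forall b, K b ->
  `|x + \sum_(0 <= n < k) (estar n b - estar n x) *: e n| <= M.
Proof.
elim: k x => [|k IHk] x vx b Kb; first by rewrite big_geq // addr0 vertex_le.
rewrite big_nat_recr //= addrA.
pose xk lam := x + (lam - estar k x) *: e k.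
have coord_xk lam n : estar n (xk lam) = if n == k then lam else estar n x.
  rewrite (coord_addZ hB) (coord_basis hB).
  by case: eqP => [->|_]; rewrite ?mulr1 ?subrKC // mulr0 addr0.
have vxk lam : `|lam| = eps k -> brick_vertex estar eps (xk lam).
  by move=> lamk n; rewrite coord_xk; case: eqP => [->|].
have sum_xk lam : \sum_(0 <= n < k) (estar n b - estar n (xk lam)) *: e n
    = \sum_(0 <= n < k) (estar n b - estar n x) *: e n.
  by apply: eq_big_nat => n /andP[_ ltnk]; rewrite coord_xk (ltn_eqF ltnk).
have bound lam : `|lam| = eps k -> `|x + \sum_(0 <= n < k)
    (estar n b - estar n x) *: e n + (lam - estar k x) *: e k| <= M.
  by move=> lamk; rewrite addrAC -(sum_xk lam); exact: IHk (vxk _ lamk) b Kb.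
apply: norm_segment_le (bound _ (ger0_norm (eps_ge0 k)))
  (bound (- eps k) _) _; first by rewrite normrN ger0_norm.
by have := Kb k; rewrite ler_norml => /andP[? ?]; apply/andP; split; lra.
Qed.

Lemma brick_norm_le x x0 : K x -> brick_vertex estar eps x0 -> `|x| <= M.
Proof.
move=> Kx vx0.
pose z N := x0 + \sum_(0 <= n < N) (estar n x - estar n x0) *: e n.
have cvg_z : z @ \oo --> x.
  have -> : z = cst x0 - series (fun n => estar n x0 *: e n)
                  + series (fun n => estar n x *: e n).
    apply: funext => N; rewrite /z !fctE /series /= -addrA; congr (_ + _).
    by rewrite addrC -sumrB; apply: eq_bigr => i _; rewrite scalerBl.
  rewrite -[X in _ --> X]add0r -(subrr x0).
  by apply: cvgD; [apply: cvgB; [exact: cvg_cst | exact: hB.1] | exact: hB.1].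
have := closed_cvg _ (@closed_closed_ball_ _ _ 0 M) _ _ cvg_z.
rewrite /closed_ball_ /= sub0r normrN; apply.
by apply: nearW => N; rewrite /closed_ball_ /= sub0r normrN vertex_replace_le.
Qed.

End Brick.

Section Radii.
Context {R : realType} {X : normedModType R}.
Context {e : nat -> X} {estar : nat -> X -> R} {eps : nat -> R}.
Hypothesis hB : schauder_basis e estar.
Hypothesis eps_ge0 : forall n, 0 <= eps n.

Let K := brick estar eps.
Let signs := [set theta : nat -> R | forall n, theta n = 1 \/ theta n = -1].

Lemma series_norm_le_unc_radius {theta} : signs theta ->
  (series_norm (fun n => theta n * eps n *: e n) <= unc_radius e eps)%E.
Proof. by move=> ?; apply: ereal_sup_ubound; exists theta. Qed.

Lemma ext_radius_le_unc_radius : (ext_radius K <= unc_radius e eps)%E.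
Proof.
have one_sign : signs (fun=> 1) by left.
rewrite /ext_radius; destruct pselect as [ex|no_ext] => /=; last first.
  apply: le_trans _ (series_norm_le_unc_radius one_sign).
  rewrite /series_norm; destruct pselect as [cvg1|] => //=; case: no_ext.
  eexists; apply: (brick_vertex_extreme hB).
  exact: sign_series_vertex hB eps_ge0 _ _ one_sign cvg1.
apply: ge_ereal_sup => _ [y /(extreme_brick_vertex hB) vy <-].
pose theta n : R := if 0 <= estar n y then 1 else -1.
have theta_sign : signs theta by move=> n; rewrite /theta; case: ifP; [left|right].
have theta_coord : (fun n => theta n * eps n *: e n) = (fun n => estar n y *: e n).
  apply: funext => n; rewrite /theta -(vy n); case: ifP => [y0|/negbT].
    by rewrite mul1r ger0_norm.
  by rewrite -ltNge => /ltr0_norm ->; rewrite mulN1r opprK.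
by rewrite -(series_normE (hB.1 y)) -theta_coord series_norm_le_unc_radius.
Qed.

Lemma ext_radius_sup_norm : (ext_radius K < +oo)%E -> ext_radius K = sup_norm K.
Proof.
rewrite /ext_radius; destruct pselect as [[x0 ext_x0]|] => /=; last by rewrite ltxx.
set S := ereal_sup _ => S_lt.
have x0_le : ((`|x0|)%:E <= S)%E by apply: ereal_sup_ubound; exists x0.
have S_fin : S \is a fin_num by rewrite ge0_fin_numE // (le_trans _ x0_le).
have vertex_le y : brick_vertex estar eps y -> `|y| <= fine S.
  move=> vy; rewrite -lee_fin fineK //.
  by apply: ereal_sup_ubound; exists y => //; exact: brick_vertex_extreme hB _ vy.
apply: le_anti; apply/andP; split.
  by apply: ereal_sup_le => _ [y ext_y <-]; exists y => //; exact: ext_y.1.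
apply: ge_ereal_sup => _ [x Kx <-]; rewrite -(fineK S_fin) lee_fin.
have := brick_norm_le hB eps_ge0 vertex_le x x0 Kx.
by apply; exact: extreme_brick_vertex hB _ ext_x0.
Qed.

Lemma unc_radius_le_ext_radius : (unc_radius e eps < +oo)%E ->
  (unc_radius e eps <= ext_radius K)%E.
Proof.
move=> unc_lt; rewrite /ext_radius; destruct pselect as [ex|] => /=; last by rewrite leey.
apply: ge_ereal_sup => _ [theta theta_sign <-].
have := series_norm_le_unc_radius theta_sign; rewrite {1}/series_norm.
destruct pselect as [cvg_u|no_cvg] => /=; last first.
  by rewrite leye_eq => /eqP unc_oo; rewrite unc_oo ltxx in unc_lt.
move=> _; apply: ereal_sup_ubound; eexists; last exact/esym/series_normE/cvg_u.
exact/(brick_vertex_extreme hB)/(sign_series_vertex hB eps_ge0 _ _ theta_sign cvg_u).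
Qed.

End Radii.

Theorem theorem3p2 (R : realType) (X : completeNormedModType R)
    (e : nat -> X) (estar : nat -> X -> R) (eps : nat -> R)
    (hB : schauder_basis e estar) (hnorm : normalized e)
    (heps : forall n, 0 <= eps n) :
  let K := brick estar eps in
  [/\ (ext_radius K <= unc_radius e eps)%E,
      (ext_radius K < +oo)%E -> ext_radius K = sup_norm K &
      (unc_radius e eps < +oo)%E ->
        ext_radius K = unc_radius e eps /\ unc_radius e eps = sup_norm K].
Proof.
move=> K; have ext_le_unc := ext_radius_le_unc_radius hB heps.
have ext_sup := ext_radius_sup_norm hB heps.
split=> [//|//|unc_lt].
have ext_unc : ext_radius K = unc_radius e eps.
  by apply: le_anti; rewrite ext_le_unc (unc_radius_le_ext_radius hB heps unc_lt).
by split=> //; rewrite -ext_unc ext_sup // ext_unc.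
Qed.
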